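(* Let $A=(a_{ij})_{0\le i,j\le n}$ be a square integer matrix with nonnegative entries such that $F_A=\sum_{i=0}^n\prod_{j=0}^n x_j^{a_{ij}}$ is an invertible polynomial, and let $p$ be a prime with $\det A \mid (p-1)$. Let \[\Xi=\{(A^T)^{-1}\vec v \;:\; \vec v=(v_0,\dots,v_n)\in\mathbb{Z}^{n+1},\ v_0,\dots,v_n\ge 1\}\subset\mathbb{Q}^{n+1}.\] For $\vec\xi=(\xi_0,\dots,\xi_n)\in\Xi$ put $\mathrm{age}(\vec\xi)=\sum_{i=0}^n\xi_i$ and, when all $\xi_i\ge 0$ (so that each $(p-1)\xi_i$ is a nonnegative integer), \[\nu(\vec\xi)=\frac{(p-1)!}{\prod_{i=0}^n\big((p-1)\xi_i\big)!}.\] Let $\nu(A)$ denote the number of points $\vec x\in\mathbb{F}_p^{n+1}$ with $F_A(\vec x)=0$. Then \[\nu(A)\equiv(-1)^n\sum_{\substack{\vec\xi\in\Xi,\ \mathrm{age}(\vec\xi)=1\\ \xi_i\ge 0\ \forall i}}\nu(\vec\xi)\pmod p.\] *)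

From mathcomp Require Import all_boot all_order all_algebra all_field.
From mathcomp Require Import mpoly.
From mathcomp Require Import boolp classical_sets fsbigop.
Set Implicit Arguments. Unset Strict Implicit. Unset Printing Implicit Defensive.
Import Order.TTheory GRing.Theory Num.Theory.
Local Open Scope ring_scope.

(* The Berglund--Huebsch polynomial F_A = \sum_i \prod_j x_j^(a_ij),
   with coefficients in an arbitrary ring R (entries of A are assumed >= 0;
   the exponent used is |a_ij|). *)
Definition FA (R : nzRingType) (n : nat) (A : 'M[int]_n.+1) : {mpoly R[n.+1]} :=
  \sum_(i < n.+1) 'X_[ [multinom (`|A i j|%N) | j < n.+1] ].

Definition critical_point (m : nat) (P : {mpoly algC[m]}) (x : 'I_m -> algC) :=
  forall k : 'I_m, (mderiv k P).@[x] = 0.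

Definition isolated_singularity_at_0 (m : nat) (P : {mpoly algC[m]}) :=
  critical_point P (fun _ => 0) /\
  exists eps : algC, 0 < eps /\
    forall x : 'I_m -> algC, (forall j, `|x j| < eps) ->
      critical_point P x -> forall j, x j = 0.

Definition invertible_poly (n : nat) (A : 'M[int]_n.+1) :=
  \det A != 0 /\ isolated_singularity_at_0 (FA algC A).

Definition Xi (n : nat) (A : 'M[int]_n.+1) : set 'cV[rat]_n.+1 :=
  [set xi | exists v : 'cV[int]_n.+1, (forall i, 0 < v i 0) /\
       xi = invmx ((map_mx intr A)^T) *m map_mx intr v].

Definition age (n : nat) (xi : 'cV[rat]_n.+1) : rat := \sum_(i < n.+1) xi i 0.

(* nu(xi) = (p-1)! / prod_i ((p-1) xi_i)!  (used when all xi_i >= 0 and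
   (p-1) xi_i are integers; Num.trunc then returns that nonnegative integer). *)
Definition nu_xi (p n : nat) (xi : 'cV[rat]_n.+1) : rat :=
  ((p.-1)`!)%:R / (\prod_(i < n.+1) ((Num.trunc ((p.-1)%:R * xi i 0))`!)%:R).

Definition nu_A (p n : nat) (A : 'M[int]_n.+1) : nat :=
  #|[set x : 'cV['F_p]_n.+1 | (FA 'F_p A).@[fun j => x j 0] == 0]|.

From mathcomp Require Import all_boot all_order all_algebra all_field.
From mathcomp Require Import mpoly.
From mathcomp Require Import boolp classical_sets fsbigop.
From mathcomp Require Import fingroup cyclic zify.
Import Order.TTheory GRing.Theory Num.Theory.
Local Open Scope ring_scope.
Set Implicit Arguments. Unset Strict Implicit. Unset Printing Implicit Defensive.

(* Over a finite field with q elements, (y == 0) = 1 - y^(q-1), so the number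
   of zeros of F_A is -\sum_x F_A(x)^(q-1).  Writing F_A(x)^(q-1) as a sum over
   maps f : 'I_(q-1) -> 'I_(n+1) of products of monomials, each term is a
   monomial whose exponents depend only on the fibre sizes k_i = #f^-1(i); by
   the power sums over the field it sums to (-1)^(n+1) over all points when
   its exponents are positive multiples of q-1 (k is "admissible") and to 0
   otherwise.  Thus nu(A) = (-1)^n #{f | fibre sizes of f admissible} mod p.
   On the other side, when det A divides p-1 the age-one nonnegative points of
   Xi are exactly the vectors k/(p-1) with k admissible and \sum k = p-1, and
   nu(k/(p-1)) = (p-1)!/\prod k_i! is the number of maps with fibre sizes k.
   So both sides count the same maps. *)

Section FiniteFieldPowerSums.
Variable F : finFieldType.

(* The characteristic divides #|F|: Lagrange's theorem in the group (F, +). *)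
Lemma natr_card_finField : #|F|%:R = 0 :> F.
Proof. by rewrite -FinRing.zmodXgE -cardsT expg_cardG ?inE. Qed.

Lemma card_finField_pred_gt0 : (0 < #|F|.-1)%N.
Proof. by rewrite -subn1 subn_gt0 finNzRing_gt1. Qed.

Lemma expf_card_pred (c : F) : c != 0 -> c ^+ #|F|.-1 = 1.
Proof.
move=> c_nz; apply: (mulfI c_nz).
by rewrite -exprS prednK ?expf_card ?mulr1 //; apply/card_gt0P; exists 0.
Qed.

(* If #|F|-1 does not divide e, some nonzero g has g^e <> 1: otherwise the
   #|F|-1 nonzero elements would all be roots of 'X^r - 1, r = e mod #|F|-1. *)
Lemma exists_non_root_of_unity e :
  ~~ (#|F|.-1 %| e)%N -> exists2 g : F, g != 0 & g ^+ e != 1.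
Proof.
move=> ndiv; set r := (e %% #|F|.-1)%N.
have r_gt0 : (0 < r)%N by rewrite lt0n.
have r_lt : (r < #|F|.-1)%N by rewrite ltn_mod card_finField_pred_gt0.
suff [g g_nz gr] : exists2 g : F, g != 0 & g ^+ r != 1.
  exists g; rewrite // {1}(divn_eq e #|F|.-1) exprD mulnC exprM.
  by rewrite expf_card_pred ?expr1n ?mul1r.
case: (pickP [pred g : F | (g != 0) && (g ^+ r != 1)]) => [g /andP[]|all_roots].
  by exists g.
have : (#|[pred c : F | c != 0%R]| < r.+1)%N.
  rewrite cardE -(size_XnsubC (1 : F) r_gt0); apply: max_poly_roots.
  - by rewrite -size_poly_eq0 size_XnsubC.
  - apply/allP => c; rewrite mem_enum inE => c_nz.
    by have := all_roots c; rewrite rootE !hornerE subr_eq0 /= c_nz => /negbFE.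
  - exact: enum_uniq.
by rewrite cardC1 ltnS leqNgt r_lt.
Qed.

(* c |-> g c permutes F, so the power sum is fixed by g^e. *)
Lemma sum_powers_eq0 (g : F) e :
  g != 0 -> g ^+ e != 1 -> \sum_(c : F) c ^+ e = 0.
Proof.
move=> g_nz ge_ne1; set S := \sum_(c : F) c ^+ e.
have S_fixed : S = g ^+ e * S.
  rewrite {1}/S (reindex_inj (mulfI g_nz)) /=.
  by under eq_bigr do rewrite exprMn; rewrite -mulr_sumr.
apply/eqP; move/eqP: S_fixed.
by rewrite -subr_eq0 -{1}[S]mul1r -mulrBl mulf_eq0 subr_eq0 eq_sym (negbTE ge_ne1).
Qed.

Lemma sum_powers e :
  \sum_(c : F) c ^+ e = if (0 < e)%N && (#|F|.-1 %| e)%N then -1 else 0.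
Proof.
case: e => [|e].
  by under eq_bigr do rewrite expr0; rewrite sumr_const natr_card_finField.
have [dvd|ndiv] := boolP (#|F|.-1 %| e.+1)%N; last first.
  have [g g_nz ge_ne1] := exists_non_root_of_unity ndiv.
  by rewrite (sum_powers_eq0 g_nz ge_ne1).
rewrite /= (bigD1 0) //= expr0n add0r (eq_bigr (fun=> 1)); last first.
  by move=> c c_nz; case/dvdnP: dvd => q ->; rewrite mulnC exprM expf_card_pred ?expr1n.
rewrite sumr_const cardC1; apply/eqP; rewrite -subr_eq0 opprK natr1.
by rewrite prednK ?natr_card_finField // ltnW // finNzRing_gt1.
Qed.

Lemma indicator_eq0 (x : F) : ((x == 0)%:R : F) = 1 - x ^+ #|F|.-1.
Proof.
have [->|x_nz] := eqVneq x 0; last by rewrite expf_card_pred // subrr.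
by rewrite expr0n gtn_eqF ?card_finField_pred_gt0 //= subr0.
Qed.
End FiniteFieldPowerSums.

Section Fibres.
Variable I : finType.

Definition fibre_size m (f : {ffun 'I_m -> I}) (i : I) : nat :=
  \sum_(t < m) (f t == i).

Definition num_maps_with_fibres m (k : I -> nat) : nat :=
  #|[pred f : {ffun 'I_m -> I} | [forall i, fibre_size f i == k i]]|.

Definition cons_map m (i : I) (g : {ffun 'I_m -> I}) : {ffun 'I_m.+1 -> I} :=
  [ffun t => if unlift ord0 t is Some t' then g t' else i].

Lemma fibre_size_cons m i (g : {ffun 'I_m -> I}) j :
  fibre_size (cons_map i g) j = ((i == j) + fibre_size g j)%N.
Proof.
rewrite /fibre_size big_ord_recl /cons_map ffunE unlift_none; congr (_ + _)%N.
by apply: eq_bigr => t _; rewrite ffunE liftK.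
Qed.

Lemma fibre_size_le m (f : {ffun 'I_m -> I}) i : (fibre_size f i <= m)%N.
Proof.
rewrite /fibre_size -[X in (_ <= X)%N]card_ord -sum1_card.
by apply: leq_sum => t _; case: eqP.
Qed.

Lemma sum_fibre_size m (f : {ffun 'I_m -> I}) : (\sum_i fibre_size f i)%N = m.
Proof.
rewrite /fibre_size exchange_big /= -[RHS]card_ord -sum1_card.
apply: eq_bigr => t _; rewrite (bigD1 (f t)) //= eqxx big1 // => i.
by rewrite eq_sym => /negbTE ->.
Qed.

(* Recursion on m according to the image of 0. *)
Lemma num_maps_with_fibres_rec m (k : I -> nat) :
  num_maps_with_fibres m.+1 k =
  (\sum_(i | (0 < k i)%N) num_maps_with_fibres m (fun j => k j - (i == j)))%N.
Proof.
rewrite /num_maps_with_fibres -sum1_card.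
rewrite (reindex (fun ig : I * {ffun 'I_m -> I} => cons_map ig.1 ig.2)) /=; last first.
  exists (fun f : {ffun 'I_m.+1 -> I} => (f ord0, [ffun t => f (lift ord0 t)])).
    move=> [i g] _ /=; rewrite /cons_map ffunE unlift_none; congr (_, _).
    by apply/ffunP => t; rewrite !ffunE liftK.
  move=> f _ /=; apply/ffunP => t; rewrite /cons_map ffunE.
  by case: unliftP => [t' ->|->]; rewrite ?ffunE.
rewrite -(pair_big_dep xpredT
  (fun i g => [forall j, fibre_size (cons_map i g) j == k j]) (fun _ _ => 1%N)) /=.
rewrite [RHS]big_mkcond /=; apply: eq_bigr => i _.
rewrite -sum1_card; case: ifP => ki.
  apply: eq_bigl => g; rewrite !inE; apply/forallP/forallP => h j.
    by have := h j; rewrite fibre_size_cons => /eqP <-; apply/eqP; lia.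
  have := h j; rewrite fibre_size_cons => /eqP ->; apply/eqP.
  by case: eqP => [<-|_]; lia.
apply: big_pred0 => g; apply/negP => /forallP /(_ i) /eqP.
by rewrite fibre_size_cons eqxx; lia.
Qed.

Lemma num_maps_with_fibres_fact m (k : I -> nat) :
  (\sum_i k i)%N = m -> (num_maps_with_fibres m k * \prod_i (k i)`!)%N = m`!.
Proof.
elim: m k => [|m IHm] k sum_k.
  have k0 i : k i = 0%N.
    by apply/eqP; move/eqP: sum_k; rewrite sum_nat_eq0 => /forallP /(_ i).
  rewrite big1 ?muln1 => [|i _]; last by rewrite k0.
  rewrite /num_maps_with_fibres (eq_card (B := predT)) ?card_ffun ?card_ord // => f.
  by rewrite !inE; apply/forallP => i; rewrite /fibre_size big_ord0 k0.
rewrite num_maps_with_fibres_rec big_distrl /=.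
rewrite (eq_bigr (fun i => k i * m`!)%N) => [|i ki]; last first.
  have keep_j j : j != i -> (k j - (i == j))%N = k j.
    by rewrite eq_sym => /negbTE ->; rewrite subn0.
  rewrite -(IHm (fun j => k j - (i == j))%N); last first.
    rewrite (bigD1 i) //= in sum_k; rewrite (bigD1 i) //= eqxx.
    by rewrite (eq_bigr k) => [|j /keep_j]; lia.
  rewrite [X in _ = (_ * (_ * X))%N](bigD1 i) // [X in (_ * X)%N = _](bigD1 i) //=.
  have -> : (\prod_(j | j != i) (k j - (i == j))`! = \prod_(j | j != i) (k j)`!)%N.
    by apply: eq_bigr => j /keep_j ->.
  by rewrite eqxx -(prednK ki) factS subn1 /=; lia.
rewrite -big_distrl /= factS -sum_k; congr (_ * _)%N.
rewrite [RHS](bigID (fun i => 0 < k i)%N) /= [X in (_ + X)%N]big1 ?addn0 //.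
by move=> i; rewrite -leqNgt leqn0 => /eqP.
Qed.

Definition fibre_vec m (f : {ffun 'I_m -> I}) : {ffun I -> 'I_m.+1} :=
  [ffun i => inord (fibre_size f i)].

Lemma fibre_vecE m (f : {ffun 'I_m -> I}) i : fibre_vec f i = fibre_size f i :> nat.
Proof. by rewrite ffunE inordK // ltnS fibre_size_le. Qed.

Lemma card_by_fibre_vec m (P : pred {ffun I -> 'I_m.+1}) :
  #|[pred f : {ffun 'I_m -> I} | P (fibre_vec f)]| =
  (\sum_(k : {ffun I -> 'I_m.+1} | ((\sum_i (k i : nat)) == m) && P k)
     num_maps_with_fibres m (fun i => k i))%N.
Proof.
rewrite -sum1_card (partition_big (@fibre_vec m)
  (fun k : {ffun I -> 'I_m.+1} => ((\sum_i (k i : nat)) == m) && P k)) /= => [|f]; last first.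
  rewrite inE => ->; rewrite andbT (eq_bigr (fibre_size f)) ?sum_fibre_size //.
  by move=> i _; rewrite fibre_vecE.
apply: eq_bigr => k /andP[_ Pk]; rewrite /num_maps_with_fibres -sum1_card; apply: eq_bigl => f.
rewrite !inE; apply/andP/forallP => [[_ /eqP <-] i|fibres]; first by rewrite fibre_vecE.
have -> : fibre_vec f = k.
  by apply/ffunP => i; apply: val_inj; rewrite /= fibre_vecE; apply/eqP.
by rewrite Pk.
Qed.
End Fibres.

Section PointCount.
Variables (n : nat) (A : 'M[int]_n.+1).

(* The exponent of x_j in \prod_i (x^(A_i))^(k i). *)
Definition monomial_exponent (k : 'I_n.+1 -> nat) (j : 'I_n.+1) : nat :=
  \sum_(i < n.+1) k i * `|A i j|%N.

Definition admissible (q : nat) (k : 'I_n.+1 -> nat) : bool :=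
  [forall j, (0 < monomial_exponent k j)%N && (q %| monomial_exponent k j)%N].

Lemma admissible_ext q (k1 k2 : 'I_n.+1 -> nat) :
  k1 =1 k2 -> admissible q k1 = admissible q k2.
Proof.
move=> k12; apply: eq_forallb => j.
by rewrite /monomial_exponent (eq_bigr (fun i => k2 i * `|A i j|)%N) // => i _; rewrite k12.
Qed.

Lemma FA_eval (R : comNzRingType) (x : 'I_n.+1 -> R) :
  (FA R A).@[x] = \sum_(i < n.+1) \prod_(j < n.+1) x j ^+ `|A i j|%N.
Proof.
rewrite /FA raddf_sum; apply: eq_bigr => i _.
by apply: (etrans (mevalX _ _)); apply: eq_bigr => j _; rewrite mnmE.
Qed.

Lemma prod_monomials (R : comNzRingType) m (f : {ffun 'I_m -> 'I_n.+1})
    (x : 'I_n.+1 -> R) :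
  \prod_(t < m) \prod_(j < n.+1) x j ^+ `|A (f t) j|%N =
  \prod_(j < n.+1) x j ^+ monomial_exponent (fibre_size f) j.
Proof.
rewrite exchange_big; apply: eq_bigr => j _; rewrite -expr_sum; congr (_ ^+ _).
rewrite /monomial_exponent /fibre_size.
under [RHS]eq_bigr do rewrite big_distrl /=.
rewrite exchange_big /=; apply: eq_bigr => t _.
rewrite (bigD1 (f t)) //= eqxx mul1n big1 ?addn0 // => i.
by rewrite eq_sym => /negbTE ->.
Qed.

Variable F : finFieldType.

(* Summing a monomial over F^(n+1) factors into one-variable power sums. *)
Lemma sum_monomial_over_points (e : 'I_n.+1 -> nat) :
  \sum_(x : {ffun 'I_n.+1 -> F}) \prod_(j < n.+1) x j ^+ e j =
  if [forall j, (0 < e j)%N && (#|F|.-1 %| e j)%N] then (-1) ^+ n.+1 else 0.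
Proof.
rewrite -(bigA_distr_bigA (fun j (c : F) => c ^+ e j)) /=.
under eq_bigr do rewrite sum_powers.
case: (boolP [forall j, _]) => [/forallP all_j | /forallPn [j /negbTE not_j]].
  by rewrite (eq_bigr (fun=> -1)) ?prodr_const ?card_ord // => j _; rewrite all_j.
by apply/eqP; rewrite prodf_seq_eq0; apply/hasP; exists j; rewrite ?mem_index_enum //= not_j.
Qed.

(* #{x | F_A(x) = 0} = \sum_x (1 - F_A(x)^(q-1)) with q = #|F|; expanding the
   power as a sum over maps 'I_(q-1) -> 'I_(n+1) only admissible fibre sizes
   survive, each contributing (-1)^(n+1). *)
Lemma card_zeros_FA :
  #|[set x : {ffun 'I_n.+1 -> F} | (FA F A).@[x] == 0]|%:R =
  (-1) ^+ n * #|[pred f : {ffun 'I_#|F|.-1 -> 'I_n.+1} |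
                 admissible #|F|.-1 (fibre_size f)]|%:R :> F.
Proof.
have count_as_sum : #|[set x : {ffun 'I_n.+1 -> F} | (FA F A).@[x] == 0]|%:R =
    \sum_(x : {ffun 'I_n.+1 -> F}) (1 - (FA F A).@[x] ^+ #|F|.-1).
  rewrite -sum1_card natr_sum big_mkcond /=; apply: eq_bigr => x _.
  by rewrite inE -indicator_eq0; case: eqP.
have power_expand (x : {ffun 'I_n.+1 -> F}) : (FA F A).@[x] ^+ #|F|.-1 =
    \sum_(f : {ffun 'I_#|F|.-1 -> 'I_n.+1})
      \prod_(j < n.+1) x j ^+ monomial_exponent (fibre_size f) j.
  rewrite FA_eval -[X in _ ^+ X]card_ord -prodr_const bigA_distr_bigA /=.
  by apply: eq_bigr => f _; apply: prod_monomials.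
rewrite count_as_sum sumrB sumr_const card_ffun card_ord natrX natr_card_finField.
rewrite expr0n /= sub0r; under eq_bigr do rewrite power_expand.
rewrite exchange_big /=; under eq_bigr do rewrite sum_monomial_over_points.
by rewrite -big_mkcond sumr_const exprS mulN1r mulNrn opprK mulr_natr.
Qed.
End PointCount.

Lemma nu_A_Fp n (A : 'M[int]_n.+1) p : prime p ->
  (nu_A p A)%:R = (-1) ^+ n * #|[pred f : {ffun 'I_p.-1 -> 'I_n.+1} |
                                  admissible A p.-1 (fibre_size f)]|%:R :> 'F_p.
Proof.
move=> p_pr; have := card_zeros_FA A 'F_p; rewrite card_Fp //.
move=> <-; congr (_ %:R); rewrite /nu_A -!sum1_card.
rewrite (reindex (fun y : {ffun 'I_n.+1 -> 'F_p} => \col_j y j)) /=; last first.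
  exists (fun x : 'cV['F_p]_n.+1 => [ffun j => x j 0]) => [y _|x _].
    by apply/ffunP => j; rewrite ffunE mxE.
  by apply/matrixP => i j; rewrite mxE ffunE (ord1 j).
apply: eq_bigl => y; rewrite !inE; congr (_ == 0).
by apply: meval_eq => j; rewrite mxE.
Qed.

Section XiPoints.
Variables (n : nat) (A : 'M[int]_n.+1).
Hypotheses (A_ge0 : forall i j, 0 <= A i j) (detA_nz : \det A != 0).

Local Notation AT := ((map_mx intr A)^T : 'M[rat]_n.+1).

Definition scaled_vec (m : nat) (k : 'I_n.+1 -> nat) : 'cV[rat]_n.+1 :=
  \col_i ((k i)%:R / m%:R).

Lemma unitmx_AT : AT \in unitmx.
Proof. by rewrite unitmxE det_tr det_map_mx unitfE intr_eq0. Qed.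

Lemma XiP xi :
  Xi A xi <-> exists2 v : 'cV[int]_n.+1, (forall i, 0 < v i 0) & AT *m xi = map_mx intr v.
Proof.
split=> [[v [v_pos ->]]|[v v_pos ATxi]]; exists v => //; first by rewrite mulKVmx ?unitmx_AT.
by rewrite -ATxi mulKmx ?unitmx_AT.
Qed.

Lemma AT_scaled_vec m k :
  AT *m scaled_vec m k = \col_j ((monomial_exponent A k j)%:R / m%:R).
Proof.
apply/matrixP => j z; rewrite (ord1 z) !mxE /monomial_exponent natr_sum mulr_suml.
apply: eq_bigr => i _; rewrite !mxE natrM.
have -> : (`|A i j|%N)%:R = (A i j)%:~R :> rat by rewrite -[in RHS](gez0_abs (A_ge0 i j)).
by rewrite mulrA (mulrC (A i j)%:~R).
Qed.

Lemma scaled_vec_in_Xi m k : (0 < m)%N -> Xi A (scaled_vec m k) <-> admissible A m k.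
Proof.
move=> m_gt0; have m_nz : m%:R != 0 :> rat by rewrite pnatr_eq0 -lt0n.
rewrite XiP AT_scaled_vec; split=> [[v v_pos /matrixP ATxi]|adm].
  apply/forallP => j; have := ATxi j 0; rewrite !mxE => /(canRL (mulfVK m_nz)).
  rewrite -[_%:R]/((monomial_exponent A k j)%:Z%:~R) -[m%:R]/(m%:Z%:~R) -intrM.
  move=> /intr_inj e_eq; have v_gt0 := v_pos j.
  by apply/andP; split; [lia | apply/dvdnP; exists (absz (v j 0)); lia].
exists (\col_j ((monomial_exponent A k j %/ m)%:Z)) => [j|].
  by rewrite mxE ltz_nat divn_gt0 //; case/andP: (forallP adm j) => e_gt0 /dvdn_leq->.
apply/matrixP => j z; rewrite !mxE; case/andP: (forallP adm j) => _ m_dvd.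
by rewrite -{1}(divnK m_dvd) natrM mulfK.
Qed.

Lemma age_scaled_vec m k : age (scaled_vec m k) = (\sum_i k i)%:R / m%:R.
Proof. by rewrite /age natr_sum mulr_suml; apply: eq_bigr => i _; rewrite mxE. Qed.

(* If det A divides m, then m xi is integral for xi in Xi (Cramer's rule). *)
Lemma Xi_integral m xi : (\det A %| m%:Z)%Z -> Xi A xi ->
  exists w : 'cV[int]_n.+1, forall i, m%:R * xi i 0 = (w i 0)%:~R.
Proof.
move=> /dvdzP[q m_eq] [v [_ ->]]; exists (q *: (\adj A^T *m v)) => i.
have adj_map : \adj AT *m map_mx intr v = map_mx intr (\adj A^T *m v).
  by rewrite map_mxM map_mx_adj map_trmx.
rewrite /invmx unitmx_AT det_tr det_map_mx -scalemxAl adj_map.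
rewrite !mxE -[m%:R]/(m%:Z%:~R) m_eq !rmorphM /= mulrA mulfK ?intr_eq0 //.
Qed.

Lemma Xi_nonneg_scaled m xi : (0 < m)%N -> (\det A %| m%:Z)%Z -> Xi A xi ->
  (forall i, 0 <= xi i 0) -> exists k : 'I_n.+1 -> nat, xi = scaled_vec m k.
Proof.
move=> m_gt0 detA_dvd Xi_xi xi_ge0; have m_nz : m%:R != 0 :> rat by rewrite pnatr_eq0 -lt0n.
have [w mxi_eq] := Xi_integral detA_dvd Xi_xi.
exists (fun i => absz (w i 0)); apply/matrixP => i z; rewrite (ord1 z) mxE.
have w_ge0 : 0 <= w i 0 by rewrite -(ler0z rat) -mxi_eq mulr_ge0.
by rewrite -[_%:R]/((absz (w i 0))%:Z%:~R) gez0_abs // -mxi_eq mulrC mulKf.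
Qed.

Definition age_one_weights m : pred {ffun 'I_n.+1 -> 'I_m.+1} :=
  [pred k : {ffun 'I_n.+1 -> 'I_m.+1} |
    ((\sum_i (k i : nat)) == m) && admissible A m (fun i => k i)].
(* m is determined by the type of the weights; keep it an explicit argument. *)
Arguments age_one_weights : clear implicits.

Lemma age1_Xi_image m : (0 < m)%N -> (\det A %| m%:Z)%Z ->
  ([set xi | Xi A xi /\ age xi = 1 /\ forall i, 0 <= xi i 0] =
   (fun k : {ffun 'I_n.+1 -> 'I_m.+1} => scaled_vec m (fun i => k i)) @`
     [set` age_one_weights m])%classic.
Proof.
move=> m_gt0 detA_dvd; have m_nz : m%:R != 0 :> rat by rewrite pnatr_eq0 -lt0n.
apply/seteqP; split=> [xi [Xi_xi [age1 xi_ge0]] | xi [k + <-]]; last first.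
  rewrite /= inE => /andP[/eqP sum_k adm].
  split; first exact/scaled_vec_in_Xi.
  by split=> [|i]; rewrite ?age_scaled_vec ?sum_k ?divff // mxE divr_ge0.
have [k xi_eq] := Xi_nonneg_scaled m_gt0 detA_dvd Xi_xi xi_ge0.
have sum_k : (\sum_i k i)%N = m.
  apply/eqP; rewrite -(eqr_nat rat); apply/eqP; apply: (mulIf (invr_neq0 m_nz)).
  by rewrite divff // -[in RHS]age1 xi_eq age_scaled_vec.
have k_bound i : (k i < m.+1)%N by rewrite ltnS -sum_k (bigD1 i) //= leq_addr.
have kE : (fun i => ([ffun i => Ordinal (k_bound i)] i : nat)) =1 k.
  by move=> i; rewrite ffunE.
exists [ffun i => Ordinal (k_bound i)]; last first.
  by rewrite xi_eq; apply/matrixP => i z; rewrite !mxE kE.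
rewrite /= inE (admissible_ext _ _ kE) (eq_bigr k) => [|i _]; last exact: kE.
by rewrite sum_k eqxx; apply/scaled_vec_in_Xi; rewrite -?xi_eq.
Qed.

Lemma nu_scaled_vec p k : (0 < p.-1)%N -> (\sum_i k i)%N = p.-1 ->
  nu_xi p (scaled_vec p.-1 k) = (num_maps_with_fibres p.-1 k)%:R.
Proof.
move=> pm1_gt0 sum_k; have m_nz : (p.-1)%:R != 0 :> rat by rewrite pnatr_eq0 -lt0n.
rewrite /nu_xi; under eq_bigr do rewrite mxE mulrCA divff // mulr1 natrK.
rewrite -(num_maps_with_fibres_fact sum_k) natrM -natr_prod mulfK // pnatr_eq0 -lt0n.
by rewrite prodn_gt0 // => i; rewrite fact_gt0.
Qed.

Lemma sum_nu_Xi p : prime p -> (\det A %| (p.-1)%:Z)%Z ->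
  \sum_(xi \in [set xi | Xi A xi /\ age xi = 1 /\ forall i, 0 <= xi i 0]%classic)
    nu_xi p xi =
  #|[pred f : {ffun 'I_p.-1 -> 'I_n.+1} | admissible A p.-1 (fibre_size f)]|%:R.
Proof.
move=> p_pr detA_dvd; have pm1_gt0 : (0 < p.-1)%N.
  by rewrite -ltnS prednK ?prime_gt1 ?prime_gt0.
have m_nz : (p.-1)%:R != 0 :> rat by rewrite pnatr_eq0 -lt0n.
rewrite (age1_Xi_image pm1_gt0 detA_dvd) fsbig_image => [|k1 k2 _ _ /matrixP k12]; last first.
  apply/ffunP => i; apply: val_inj; have := k12 i 0; rewrite !mxE.
  by move=> /(mulIf (invr_neq0 m_nz)) /eqP; rewrite eqr_nat => /eqP.
rewrite -(@bigfs _ _ _ _ (enum {ffun 'I_n.+1 -> 'I_p.-1.+1})) ?enum_uniq //; last first.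
  by move=> k _; rewrite mem_enum.
rewrite big_enum_cond /= (eq_card (B := [pred f : {ffun 'I_p.-1 -> 'I_n.+1} |
    admissible A p.-1 (fun i => fibre_vec f i)])) => [|f]; last first.
  by rewrite !inE; apply: admissible_ext => i; rewrite fibre_vecE.
rewrite (card_by_fibre_vec (fun k => admissible A p.-1 (fun i => k i))) natr_sum.
apply: eq_bigr => k /andP[/eqP sum_k _]; exact: nu_scaled_vec.
Qed.
End XiPoints.

Lemma Fp_intr_eq p (a b : int) :
  prime p -> a%:~R = b%:~R :> 'F_p -> exists k : int, a - b = p%:Z * k.
Proof.
move=> p_pr ab_eq; have /dvdzP[k ->] : (p %| a - b)%Z.
  by rewrite (dvdz_pcharf (pchar_Fp p_pr)) rmorphB /= ab_eq subrr.
by exists k; rewrite mulrC.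
Qed.

Unset Implicit Arguments. Set Strict Implicit.

Theorem proposition3p1 (n : nat) (A : 'M[int]_n.+1) (p : nat) :
  (forall i j, 0 <= A i j) ->
  invertible_poly A ->
  prime p ->
  (\det A %| (p.-1)%:Z)%Z ->
  exists k : int,
    (nu_A p A)%:R - (-1) ^+ n *
      (\sum_(xi \in [set xi | Xi A xi /\ age xi = 1 /\
                              forall i, 0 <= xi i 0]%classic) nu_xi p xi)
    = (p%:Z * k)%:~R :> rat.
Proof.
move=> A_ge0 [detA_nz _] p_pr detA_dvd.
rewrite (sum_nu_Xi A_ge0 detA_nz p_pr detA_dvd).
set G := #|_|; have [k count_eq] : exists k : int,
    (nu_A p A)%:Z - (-1) ^+ n * G%:Z = p%:Z * k.
  by apply: Fp_intr_eq => //; rewrite rmorphM rmorphXn rmorphN1 /=; apply: nu_A_Fp.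
by exists k; rewrite -count_eq rmorphB rmorphM rmorphXn rmorphN1.
Qed.
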